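(* Let $q=2$, $m\geq2$ and $1\leq r\leq 2m-1$. If $r\geq m$, then $\mathcal C_r$ contains a function $\phi(F)$ with $F$ a monomial of class $(0,0,2m-r,r-m)$. If $r\leq m$, then $\mathcal C_r$ contains a function $\phi(F)$ with $F$ a monomial of class $(0,m-r,r,0)$.
   Context: $k=\mathbf F_2$. $V$ is a $2m$-dimensional $k$-space with nondegenerate alternating form $b$ and symplectic basis $e_1,\dots,e_m,f_m,\dots,f_1$ ($b(e_i,f_j)=\delta_{ij}$, $b(e_i,e_j)=b(f_i,f_j)=0$) with coordinate functions $x_1,\dots,x_m,y_m,\dots,y_1$; $\operatorname{Sp}(V)$ acts on functions by linear substitution. $\mathcal P$ is the set of $1$-dimensional subspaces and $k[\mathcal P]$ the space of functions $\mathcal P\to k$ (functions on $V\setminus\{0\}$). A subspace is totally isotropic if $b$ vanishes on it; $\mathcal I_r$ is the set of $r$-dimensional subspaces that are totally isotropic or are $W^\perp$ for $W$ totally isotropic. $\mathcal C_r$ is the $k\operatorname{Sp}(V)$-submodule of $k[\mathcal P]$ generated by the characteristic function of an element of $\mathcal I_r$. In $k[X_1,\dots,X_m,Y_1,\dots,Y_m]$ put $W_i=X_iY_i$, $Z_i\in\{X_i,Y_i\}$; a monomial $F=\prod_{i\in S}W_i\prod_{i\in T}Z_i$ with $S,T$ disjoint subsets of $\{1,\dots,m\}$ is of class $(0,|S|,|T|,m-|S|-|T|)$. $\phi$ is evaluation $X_i\mapsto x_i,Y_i\mapsto y_i$. *)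

From HB Require Import structures.
From mathcomp Require Import all_boot all_order all_algebra all_fingroup all_field.
Set Implicit Arguments. Unset Strict Implicit. Unset Printing Implicit Defensive.
Import GRing.Theory.
Local Open Scope ring_scope.

(* k = F_2.  V = F_2^(2m) as row vectors of length m+m: the first block holds
   the coordinates x_1..x_m (w.r.t. e_1..e_m), the second block the
   coordinates y_1..y_m (w.r.t. f_1..f_m). *)
Definition V (m : nat) := 'rV['F_2]_(m + m).

Definition xc (m : nat) (i : 'I_m) (v : V m) : 'F_2 := v 0 (lshift m i).
Definition yc (m : nat) (i : 'I_m) (v : V m) : 'F_2 := v 0 (rshift m i).

Definition bform (m : nat) (u v : V m) : 'F_2 :=
  \sum_(i < m) (xc i u * yc i v - yc i u * xc i v).

(* Sp(V): invertible linear maps (acting on row vectors v |-> v *m g)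
   preserving b. *)
Definition is_Sp (m : nat) (g : 'M['F_2]_(m + m)) : Prop :=
  g \in unitmx /\ forall u v : V m, bform (u *m g) (v *m g) = bform u v.

(* Subspaces of V are represented by (row spaces of) square matrices. *)
Definition totally_isotropic (m : nat) (W : 'M['F_2]_(m + m)) : Prop :=
  forall u v : V m, (u <= W)%MS -> (v <= W)%MS -> bform u v = 0.

Definition is_perp_of (m : nat) (U W : 'M['F_2]_(m + m)) : Prop :=
  forall v : V m, (v <= U)%MS <-> (forall w : V m, (w <= W)%MS -> bform v w = 0).

Definition in_I (m r : nat) (U : 'M['F_2]_(m + m)) : Prop :=
  \rank U = r /\
  (totally_isotropic U \/
   exists W : 'M['F_2]_(m + m), totally_isotropic W /\ is_perp_of U W).

(* P: one-dimensional subspaces of V, i.e. (since k = F_2) nonzero vectors. *)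
Definition P (m : nat) := {v : V m | v != 0}.

(* Action of g on points (for invertible g, v *m g is nonzero). *)
Definition actP (m : nat) (g : 'M['F_2]_(m + m)) (p : P m) : P m :=
  insubd p (val p *m g).

Inductive gen_submod (m : nat) (f0 : P m -> 'F_2) : (P m -> 'F_2) -> Prop :=
  | gs_gen : gen_submod f0 f0
  | gs_zero : gen_submod f0 (fun _ => 0)
  | gs_add f h : gen_submod f0 f -> gen_submod f0 h ->
      gen_submod f0 (fun p => f p + h p)
  | gs_scale (c : 'F_2) f : gen_submod f0 f -> gen_submod f0 (fun p => c * f p)
  | gs_act g f : is_Sp g -> gen_submod f0 f -> gen_submod f0 (fun p => f (actP g p)).

Definition charfun (m : nat) (U : 'M['F_2]_(m + m)) : P m -> 'F_2 :=
  fun p => if (val p <= U)%MS then 1 else 0.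

Definition C (m : nat) (U : 'M['F_2]_(m + m)) : (P m -> 'F_2) -> Prop :=
  gen_submod (charfun U).

(* phi(F) for the monomial F = prod_{i in S} X_i Y_i * prod_{i in T} Z_i,
   where Z_i = X_i if z i, and Z_i = Y_i otherwise. *)
Definition phi_mon (m : nat) (S T : {set 'I_m}) (z : 'I_m -> bool) : P m -> 'F_2 :=
  fun p => (\prod_(i in S) (xc i (val p) * yc i (val p))) *
           \prod_(i in T) (if z i then xc i (val p) else yc i (val p)).

(* C_r contains phi(F) for some monomial F of class (0, s, t, m - s - t). *)
Definition contains_class (m : nat) (U : 'M['F_2]_(m + m)) (s t : nat) : Prop :=
  exists (S T : {set 'I_m}) (z : 'I_m -> bool),
    [disjoint S & T] /\ #|S| = s /\ #|T| = t /\ C U (phi_mon S T z).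

From HB Require Import structures.
From mathcomp Require Import all_boot all_order all_algebra all_fingroup all_field.
From mathcomp Require Import zify.
From Stdlib Require Import FunctionalExtensionality.
Set Implicit Arguments. Unset Strict Implicit. Unset Printing Implicit Defensive.
Import GRing.Theory.
Local Open Scope ring_scope.

(* Using symplectic transvections t_u : v |-> v + b(v,u) u,
      the rows of a basis of a totally isotropic W are moved one at a time onto
      f_0, f_1, ...; so some g in Sp(V) maps L_k = <f_0,...,f_(k-1)> onto W,
      k = rank W <= m.  Since rank W^perp = 2m - k, the same g maps
      L_k^perp = {x_0 = ... = x_(k-1) = 0} onto W^perp.  Hence every U in I_r
      is a translate of L_r (r <= m) or of L_(2m-r)^perp (r >= m).
   2. Cosets.  If Q is a subgroup, f in Q is orthogonal to Q and b(a,f) = 1,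
      then 1_(a+Q) = 1_Q o t_(a+f) + 1_Q o t_a, so the indicator of a coset of
      a translate of U lies in C_r.
   3. Monomials.  For Q = L_k^perp and a = e_0 + ... + e_(k-1) the coset
      indicator is x_0 ... x_(k-1); for Q = L_r and
      a = sum_i e_i + sum_(i >= r) f_i it is prod_(i >= r) x_i y_i prod_(i < r) x_i. *)

Lemma F2_cases (x : 'F_2) : x = 0 \/ x = 1.
Proof. by case: x => [[|[|n]] Hn]; [left; apply/val_inj | right; apply/val_inj |]. Qed.

Lemma F2_neq0 (x : 'F_2) : x != 0 -> x = 1.
Proof. by case: (F2_cases x) => ->. Qed.

Lemma F2_pchar : 2 \in [pchar 'F_2].
Proof. exact: pchar_Fp. Qed.

Lemma F2_add2 (x : 'F_2) : x + x = 0.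
Proof. exact: (addrr_pchar2 F2_pchar x). Qed.

Lemma F2_opp (x : 'F_2) : - x = x.
Proof. exact: (oppr_pchar2 F2_pchar x). Qed.

Lemma F2_mul_eq1 (x y : 'F_2) : (x * y == 1) = (x == 1) && (y == 1).
Proof.
by case: (F2_cases x) => ->; rewrite ?mul0r ?mul1r // eq_sym oner_eq0.
Qed.

Lemma F2_add1_eq0 (x : 'F_2) : (x + 1 == 0) = (x == 1).
Proof. by rewrite addr_eq0 F2_opp. Qed.

Lemma F2_prod (I : finType) (A : {pred I}) (F : I -> 'F_2) :
  \prod_(i in A) F i = if [forall i in A, F i == 1] then 1 else 0.
Proof.
case: ifP => [/forall_inP h | /negbT /forall_inPn [i hi hF]].
  by apply: big1 => i /h /eqP.
by rewrite (bigD1 i) //=; case: (F2_cases (F i)) hF => -> //; rewrite mul0r.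
Qed.

Lemma vadd2 (n : nat) (v : 'rV['F_2]_n) : v + v = 0.
Proof. by rewrite -[v]scale1r -scalerDl F2_add2 scale0r. Qed.

Lemma row_free_row_indep (F : fieldType) (n p : nat) (B : 'M[F]_(n, p))
    (i0 : 'I_n) (I : Type) (s : seq I) (P : pred I) (c : I -> F) (idx : I -> 'I_n) :
  row_free B -> (forall i, P i -> idx i != i0) ->
  row i0 B != \sum_(i <- s | P i) c i *: row (idx i) B.
Proof.
move=> freeB idx_i0; apply/negP => /eqP rowE0.
pose d : 'rV[F]_n := 'e_i0 - \sum_(i <- s | P i) c i *: 'e_(idx i).
have : d *m B = 0 *m B.
  rewrite mul0mx mulmxBl mulmx_suml -rowE rowE0; apply/eqP; rewrite subr_eq0.
  by apply/eqP/eq_bigr => i _; rewrite -scalemxAl -rowE.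
move/(row_free_inj freeB) => /(congr1 (fun u : 'rV[F]_n => u 0 i0)).
rewrite !mxE summxE eqxx big1 ?subr0 ?mxE => [|i /idx_i0 ni].
  by move=> /eqP; rewrite eqxx oner_eq0.
by rewrite !mxE eq_sym (negbTE ni) mulr0.
Qed.

Section SymplecticSpace.
Variable m : nat.
Local Notation V := (V m).

Lemma xcD (i : 'I_m) (u v : V) : xc i (u + v) = xc i u + xc i v.
Proof. by rewrite /xc mxE. Qed.
Lemma ycD (i : 'I_m) (u v : V) : yc i (u + v) = yc i u + yc i v.
Proof. by rewrite /yc mxE. Qed.

Lemma xc_sum (I : Type) (s : seq I) (Ps : pred I) (c : I -> 'F_2) (w : I -> V) (i : 'I_m) :
  xc i (\sum_(j <- s | Ps j) c j *: w j) = \sum_(j <- s | Ps j) c j * xc i (w j).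
Proof. by rewrite /xc summxE; apply: eq_bigr => j _; rewrite mxE. Qed.
Lemma yc_sum (I : Type) (s : seq I) (Ps : pred I) (c : I -> 'F_2) (w : I -> V) (i : 'I_m) :
  yc i (\sum_(j <- s | Ps j) c j *: w j) = \sum_(j <- s | Ps j) c j * yc i (w j).
Proof. by rewrite /yc summxE; apply: eq_bigr => j _; rewrite mxE. Qed.

(* The Gram matrix of b: right multiplication by J swaps the x- and
   y-coordinates, and b(u, v) = u J v^T. *)
Definition Jm : 'M['F_2]_(m + m) := block_mx 0 1%:M 1%:M 0.

Lemma mulmxJ (u : V) : u *m Jm = row_mx (rsubmx u) (lsubmx u).
Proof. by rewrite -{1}(hsubmxK u) mul_row_block !mulmx0 !mulmx1 add0r addr0. Qed.

Lemma Jm_unit : Jm \in unitmx.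
Proof.
have JJ : Jm *m Jm = 1%:M.
  by rewrite mulmx_block !mul0mx !mulmx0 !mul1mx !add0r !addr0 scalar_mx_block.
by case: (mulmx1_unit JJ).
Qed.

Lemma bformE (u v : V) : bform u v = (u *m Jm *m v^T) 0 0.
Proof.
rewrite mulmxJ [in RHS]mxE big_split_ord /= /bform -big_split /=.
apply: eq_bigr => i _; rewrite row_mxEl row_mxEr !mxE /xc /yc F2_opp addrC.
by congr (_ + _); rewrite mulrC.
Qed.

(* b is bilinear and alternating, hence symmetric in characteristic 2. *)
Lemma bformDl (u w v : V) : bform (u + w) v = bform u v + bform w v.
Proof. by rewrite !bformE !mulmxDl !mxE. Qed.
Lemma bformZl (a : 'F_2) (u v : V) : bform (a *: u) v = a * bform u v.
Proof. by rewrite !bformE -!scalemxAl !mxE. Qed.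

Lemma bform_alt (u : V) : bform u u = 0.
Proof. by rewrite /bform big1 // => i _; rewrite mulrC subrr. Qed.

Lemma bform_sym (u v : V) : bform u v = bform v u.
Proof.
rewrite /bform; apply: eq_bigr => i _.
by rewrite -[RHS]F2_opp opprB [xc i v * _]mulrC [yc i v * _]mulrC.
Qed.

Lemma bformDr (u w v : V) : bform v (u + w) = bform v u + bform v w.
Proof. by rewrite !(bform_sym v) bformDl. Qed.
Lemma bformZr (a : 'F_2) (u v : V) : bform v (a *: u) = a * bform v u.
Proof. by rewrite !(bform_sym v) bformZl. Qed.

Lemma bform_sumr (I : Type) (s : seq I) (Ps : pred I) (c : I -> 'F_2) (w : I -> V) (v : V) :
  bform v (\sum_(i <- s | Ps i) c i *: w i) = \sum_(i <- s | Ps i) c i * bform v (w i).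
Proof.
elim/big_rec2: _ => [|i y1 y2 _ <-]; last by rewrite bformDr bformZr.
by rewrite bformE trmx0 mulmx0 mxE.
Qed.

Lemma bform_rows (v : V) (W : 'M['F_2]_(m + m)) (i : 'I_(m + m)) :
  (v *m Jm *m W^T) 0 i = bform v (row i W).
Proof. by rewrite bformE !mxE; apply: eq_bigr => c _; rewrite !mxE. Qed.

(* The symplectic basis: f_n (indexed by a natural number, zero when n >= m)
   and e_j. *)
Definition fvec (n : nat) : V := \row_(c < m + m) ((c : nat) == m + n)%:R.
Definition evec (j : 'I_m) : V := \row_(c < m + m) (c == lshift m j)%:R.

Lemma xc_fvec (i : 'I_m) (n : nat) : xc i (fvec n) = 0.
Proof. by rewrite /xc mxE /= eqn_leq [(m + n <= i)%N]leqNgt ltn_addr ?andbF. Qed.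
Lemma yc_fvec (i : 'I_m) (n : nat) : yc i (fvec n) = ((i : nat) == n)%:R.
Proof. by rewrite /yc mxE /= eqn_add2l. Qed.
Lemma xc_evec (i j : 'I_m) : xc i (evec j) = (i == j)%:R.
Proof. by rewrite /xc mxE (inj_eq (@lshift_inj m m)). Qed.
Lemma yc_evec (i j : 'I_m) : yc i (evec j) = 0.
Proof. by rewrite /yc mxE eq_rlshift. Qed.

Lemma bform_fvec (v : V) (j : 'I_m) : bform v (fvec j) = xc j v.
Proof.
rewrite /bform (bigD1 j) //= big1 => [|k /negbTE nk].
  by rewrite xc_fvec yc_fvec eqxx mulr1 mulr0 subr0 addr0.
by rewrite xc_fvec yc_fvec [_ == _]nk !mulr0 subr0.
Qed.
Lemma bform_evec (v : V) (j : 'I_m) : bform v (evec j) = yc j v.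
Proof.
rewrite /bform (bigD1 j) //= big1 => [|k /negbTE nk].
  by rewrite xc_evec yc_evec eqxx mulr1 mulr0 sub0r F2_opp addr0.
by rewrite xc_evec yc_evec nk !mulr0 subr0.
Qed.

Lemma bform_fvecs (i j : 'I_m) : bform (fvec i) (fvec j) = 0.
Proof. by rewrite bform_fvec xc_fvec. Qed.

Lemma Sp1 : is_Sp (1%:M : 'M['F_2]_(m + m)).
Proof. by split; [exact: unitmx1 | move=> u v; rewrite !mulmx1]. Qed.

Lemma Sp_mul (g1 g2 : 'M['F_2]_(m + m)) : is_Sp g1 -> is_Sp g2 -> is_Sp (g1 *m g2).
Proof.
move=> [u1 h1] [u2 h2]; split; first by rewrite unitmx_mul u1 u2.
by move=> u v; rewrite !mulmxA h2 h1.
Qed.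

Lemma Sp_inv (g : 'M['F_2]_(m + m)) : is_Sp g -> is_Sp (invmx g).
Proof. by move=> [u1 h1]; split => [|u v]; rewrite ?unitmx_inv // -h1 !mulmxKV. Qed.

Definition tv (u : V) : 'M['F_2]_(m + m) := 1%:M + (Jm *m u^T) *m u.

Lemma tvE (v u : V) : v *m tv u = v + bform v u *: u.
Proof.
rewrite /tv mulmxDr mulmx1 !mulmxA; congr (_ + _).
by rewrite [v *m Jm *m u^T]mx11_scalar -bformE mul_scalar_mx.
Qed.

Lemma Sp_tv (u : V) : is_Sp (tv u).
Proof.
have tv_invol : tv u *m tv u = 1%:M.
  apply/row_matrixP => i; rewrite !rowE mulmx1 mulmxA !tvE bformDl bformZl.
  by rewrite bform_alt mulr0 addr0 -addrA -scalerDl F2_add2 scale0r addr0.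
split; first by case: (mulmx1_unit tv_invol).
move=> v w; rewrite !tvE bformDl !bformDr !bformZl !bformZr bform_alt !mulr0 addr0.
by rewrite [bform u w]bform_sym mulrC -addrA F2_add2 addr0.
Qed.

End SymplecticSpace.

Arguments fvec {m} n.

Section StandardSubspaces.
Variable m : nat.
Local Notation V := (V m).

(* L_k = <f_0, ..., f_(k-1)>: all x-coordinates and the y_i with i >= k vanish. *)
Definition Lspan (k : nat) (v : V) : bool :=
  [forall i : 'I_m, xc i v == 0] && [forall i : 'I_m, (k <= i)%N ==> (yc i v == 0)].

(* Its orthogonal L_k^perp: the x_i with i < k vanish. *)
Definition Lperp (k : nat) (v : V) : bool :=
  [forall i : 'I_m, (i < k)%N ==> (xc i v == 0)].

Lemma Lspan_add (k : nat) (u v : V) : Lspan k u -> Lspan k v -> Lspan k (u + v).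
Proof.
move=> /andP [/forallP xu /forallP yu] /andP [/forallP xv /forallP yv].
apply/andP; split; apply/forallP => i; first by rewrite xcD (eqP (xu i)) (eqP (xv i)) addr0.
apply/implyP => ki.
by rewrite ycD (eqP (implyP (yu i) ki)) (eqP (implyP (yv i) ki)) addr0.
Qed.

Lemma Lperp_add (k : nat) (u v : V) : Lperp k u -> Lperp k v -> Lperp k (u + v).
Proof.
move=> /forallP xu /forallP xv; apply/forallP => i; apply/implyP => ik.
by rewrite xcD (eqP (implyP (xu i) ik)) (eqP (implyP (xv i) ik)) addr0.
Qed.

Lemma Lspan_fvec (k : nat) (i : 'I_m) : (i < k)%N -> Lspan k (fvec i).
Proof.
move=> ik; apply/andP; split; apply/forallP => j; first by rewrite xc_fvec.
apply/implyP => kj; rewrite yc_fvec; have [e|//] := eqVneq (j : nat) i.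
by move: ik; rewrite -e ltnNge kj.
Qed.

Lemma Lspan_comb (k : nat) (c : 'I_k -> 'F_2) : Lspan k (\sum_(i < k) c i *: fvec i).
Proof.
apply/andP; split; apply/forallP => j.
  by rewrite xc_sum big1 // => i _; rewrite xc_fvec mulr0.
apply/implyP => kj; rewrite yc_sum big1 // => i _; rewrite yc_fvec.
have [e|_] := eqVneq (j : nat) i; last by rewrite mulr0.
by move: (ltn_ord i); rewrite -e ltnNge kj.
Qed.

Lemma Lspan_sum (k : nat) (v : V) : Lspan k v ->
  v = \sum_(j < m | (j < k)%N) yc j v *: fvec j.
Proof.
case/andP => /forallP hx /forallP hy; apply/rowP => c; rewrite summxE.
case: (split_ordP c) => j ->.
  rewrite big1 => [|j' _]; first exact/eqP/hx.
  by rewrite mxE; have := xc_fvec j j'; rewrite /xc => ->; rewrite mulr0.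
have coef j' : (yc j' v *: fvec j') 0 (rshift m j) = yc j' v * (j' == j)%:R.
  by rewrite mxE; have := yc_fvec j j'; rewrite /yc => ->; rewrite eq_sym.
rewrite (eq_bigr _ (fun j' _ => coef j')); case: (ltnP j k) => jk.
  rewrite (bigD1 j) //= eqxx mulr1 big1 ?addr0 // => j' /andP [_ nj].
  by rewrite (negbTE nj) mulr0.
rewrite big1 => [|j' j'k]; first by apply/eqP; have := hy j; rewrite jk.
have [e|_] := eqVneq j' j; last by rewrite mulr0.
by move: j'k; rewrite e ltnNge jk.
Qed.

(* L_m is Lagrangian. *)
Lemma Lspan_m (v : V) : Lspan m v = Lperp m v.
Proof.
apply/idP/idP => [/andP [/forallP hx _] | /forallP hx].
  by apply/forallP => i; rewrite hx implybT.
apply/andP; split; apply/forallP => i; last by rewrite leqNgt ltn_ord.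
by move: (hx i); rewrite ltn_ord.
Qed.

End StandardSubspaces.

Section WittNormalForm.
Variable m : nat.
Local Notation V := (V m).

Lemma Lspan_witness (k : nat) (w : V) :
  (forall j : 'I_m, (j < k)%N -> xc j w = 0) -> ~~ Lspan k w ->
  exists j : 'I_m, (k <= j)%N /\ (xc j w != 0 \/ yc j w != 0).
Proof.
move=> wperp; rewrite negb_and => /orP [/forallPn [j xj] | /forallPn [j]].
  exists j; split; last by left.
  by rewrite leqNgt; apply/negP => /wperp xj0; rewrite xj0 eqxx in xj.
by rewrite negb_imply => /andP [kj yj]; exists j; split => //; right.
Qed.

Lemma hyperbolic_partner (k : 'I_m) (w : V) :
  (exists j : 'I_m, (k <= j)%N /\ (xc j w != 0 \/ yc j w != 0)) ->
  exists z : V, [/\ bform w z = 1, xc k z = 1 & forall j : 'I_m, (j < k)%N -> xc j z = 0].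
Proof.
move=> [j [kj wj]].
have xe_lt (i : 'I_m) (j' : 'I_m) : (i < j')%N -> xc i (evec j') = 0.
  by move=> ij; rewrite xc_evec; case: eqP => // e; rewrite e ltnn in ij.
have [yk|/F2_neq0 yk] := eqVneq (yc k w) 0; last first.
  exists (evec k); split; [by rewrite bform_evec | by rewrite xc_evec eqxx |].
  by move=> i; apply: xe_lt.
case: (boolP [exists j', xc j' w != 0]) => [/existsP [j' /F2_neq0 xj'] | /existsPn xw0].
  exists (evec k + fvec j'); rewrite bformDr bform_evec bform_fvec yk xj' add0r.
  split=> [|| i ik] //; first by rewrite xcD xc_evec xc_fvec eqxx addr0.
  by rewrite xcD xc_fvec addr0 xe_lt.
have yj : yc j w = 1 by case: wj => [xj|/F2_neq0 //]; rewrite (negbNE (xw0 j)) in xj.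
have kltj : (k < j)%N.
  by rewrite ltn_neqAle kj andbT; apply/eqP => /val_inj e; rewrite e yj in yk.
exists (evec k + evec j); rewrite bformDr !bform_evec yk yj add0r.
split=> [|| i ik] //; first by rewrite xcD (xe_lt _ _ kltj) xc_evec eqxx addr0.
by rewrite xcD !xe_lt ?addr0 // (ltn_trans ik kltj).
Qed.

Lemma transvection_pair (k : 'I_m) (w z : V) :
  (forall j : 'I_m, (j < k)%N -> xc j w = 0) ->
  bform w z = 1 -> xc k z = 1 -> (forall j : 'I_m, (j < k)%N -> xc j z = 0) ->
  exists g, [/\ is_Sp g, forall j : nat, (j < k)%N -> fvec j *m g = fvec j
              & fvec k *m g = w].
Proof.
move=> wperp wz zk zperp; exists (tv (fvec k + z) *m tv (z + w)); split.
- exact: Sp_mul (Sp_tv _) (Sp_tv _).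
- move=> j jk; pose j' := Ordinal (ltn_trans jk (ltn_ord k)); change (fvec j : V) with (fvec j' : V).
  rewrite mulmxA (tvE (fvec j')) bformDr bform_fvecs [bform _ z]bform_sym bform_fvec.
  rewrite zperp // add0r scale0r addr0 tvE bformDr ![bform (fvec j') _]bform_sym.
  by rewrite !bform_fvec zperp ?wperp // add0r scale0r addr0.
- rewrite mulmxA !tvE bformDr bform_fvecs [bform _ z]bform_sym bform_fvec zk add0r.
  rewrite scale1r addrA vadd2 add0r bformDr bform_alt add0r [bform z w]bform_sym wz.
  by rewrite scale1r addrA vadd2 add0r.
Qed.

Variable W : 'M['F_2]_(m + m).
Hypothesis isoW : totally_isotropic W.
Local Notation B := (row_base W).
Local Notation k0 := (\rank W).

Lemma row_base_sub (i : 'I_k0) : (row i B <= W)%MS.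
Proof. by apply: submx_trans (row_sub i B) _; rewrite eq_row_base. Qed.

(* Inductively, an element of Sp(V) maps f_i onto the i-th row of a basis of W
   for i < k: the next row is isotropic to the previous ones and independent
   of them, so transvection_pair extends the frame. *)
Lemma witt_frame (k : nat) : (k <= k0)%N ->
  exists h, [/\ is_Sp h, (k <= m)%N & forall i : 'I_k0, (i < k)%N -> row i B = fvec i *m h].
Proof.
elim: k => [|k IH] kk0; first by exists 1%:M; split => //; exact: Sp1.
have [h0 [Sh0 km frame]] := IH (ltnW kk0).
pose i0 : 'I_k0 := Ordinal kk0.
pose w := row i0 B *m invmx h0.
have wperp (j : 'I_m) : (j < k)%N -> xc j w = 0.
  move=> jk; rewrite -bform_fvec.
  have -> : fvec j = row (Ordinal (ltn_trans jk kk0)) B *m invmx h0.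
    by rewrite frame // mulmxK ?Sh0.1.
  by rewrite (Sp_inv Sh0).2; apply: isoW; apply: row_base_sub.
have wL : ~~ Lspan k w.
  apply/negP => /Lspan_sum wE.
  have idx_ne (j : 'I_m) : (j < k)%N -> insubd i0 j != i0.
    by move=> jk; rewrite -val_eqE val_insubd (ltn_trans jk kk0) /= neq_ltn jk.
  move/negP: (row_free_row_indep (index_enum 'I_m) (fun j => yc j w) (row_base_free W) idx_ne).
  apply; apply/eqP.
  rewrite -[row i0 B](mulmxKV Sh0.1) -/w {1}wE mulmx_suml; apply/eq_bigr => j jk.
  by rewrite -scalemxAl frame val_insubd (ltn_trans jk kk0).
have [j [kj wj]] := Lspan_witness wperp wL.
have km1 : (k < m)%N := leq_ltn_trans kj (ltn_ord j).
have [z [wz zk zperp]] := hyperbolic_partner (k := Ordinal km1) (ex_intro _ j (conj kj wj)).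
have [g [Sg gfix gk]] := transvection_pair (k := Ordinal km1) wperp wz zk zperp.
exists (g *m h0); split => //; first exact: Sp_mul.
move=> i; rewrite ltnS leq_eqVlt => /orP [/eqP ik | ik]; last by rewrite frame // mulmxA gfix.
have -> : i = i0 by apply: val_inj.
by rewrite mulmxA [fvec i0 *m g]gk mulmxKV ?Sh0.1.
Qed.

Lemma witt : exists h, [/\ is_Sp h, (k0 <= m)%N & forall v : V, (v *m h <= W)%MS = Lspan k0 v].
Proof.
have [h [Sh k0m frame]] := witt_frame (leqnn k0).
exists h; split => // v; apply/idP/idP.
  rewrite -(eq_row_base W) => /submxP [D vhD]; rewrite [D *m _]mulmx_sum_row in vhD.
  have -> : v = \sum_(i < k0) D 0 i *: fvec i.
    apply: (can_inj (mulmxK Sh.1)); rewrite vhD mulmx_suml.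
    by apply: eq_bigr => i _; rewrite frame // scalemxAl.
  exact: Lspan_comb.
move/Lspan_sum => ->; rewrite mulmx_suml; apply: summx_sub => j jk.
rewrite -scalemxAl; apply: scalemx_sub.
by rewrite -[fvec j *m h](frame (Ordinal jk)) ?row_base_sub.
Qed.

End WittNormalForm.

Section ModuleElements.
Variable m : nat.
Local Notation V := (V m).

Lemma perp_rank (U W : 'M['F_2]_(m + m)) : is_perp_of U W ->
  \rank U = (m + m - \rank W)%N.
Proof.
move=> UW.
have memU (v : V) : (v <= U)%MS = (v <= kermx (Jm m *m W^T))%MS.
  rewrite sub_kermx mulmxA; apply/idP/idP.
    move/UW => vW; apply/eqP/rowP => i; rewrite bform_rows mxE; apply: vW; exact: row_sub.
  move/eqP => vJW; apply/UW => w /submxP [D ->].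
  by rewrite mulmx_sum_row bform_sumr big1 // => i _; rewrite -bform_rows vJW mxE mulr0.
have eqK : (U == kermx (Jm m *m W^T))%MS.
  by apply/andP; split; apply/row_subP => i; [rewrite -memU | rewrite memU]; apply: row_sub.
rewrite (eqmx_rank eqK) mxrank_ker -mxrank_tr trmx_mul trmxK mxrankMfree ?mxrank_tr //.
by rewrite row_free_unit unitmx_tr Jm_unit.
Qed.

Lemma perp_image (U W h : 'M['F_2]_(m + m)) (k : nat) : is_Sp h -> is_perp_of U W ->
  (forall v : V, (v *m h <= W)%MS = Lspan k v) ->
  forall v : V, (v *m h <= U)%MS = Lperp k v.
Proof.
move=> Sh UW hW v; apply/idP/idP.
  move/UW => vhW; apply/forallP => i; apply/implyP => ik.
  rewrite -bform_fvec -(Sh.2 v (fvec i)); apply/eqP/vhW.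
  by rewrite hW Lspan_fvec.
move/forallP => vP; apply/UW => w wW.
have /Lspan_sum wE : Lspan k (w *m invmx h) by rewrite -hW mulmxKV ?Sh.1.
rewrite -(mulmxKV Sh.1 w) Sh.2 wE bform_sumr big1 // => j jk.
by rewrite bform_fvec (eqP (implyP (vP j) jk)) mulr0.
Qed.

Lemma standard_form (r : nat) (U : 'M['F_2]_(m + m)) : in_I r U ->
  ((m <= r)%N -> exists2 h, is_Sp h & forall v : V, (v *m h <= U)%MS = Lperp (m + m - r) v) /\
  ((r <= m)%N -> exists2 h, is_Sp h & forall v : V, (v *m h <= U)%MS = Lspan r v).
Proof.
case=> rkU [isoU | [W [isoW UW]]].
  have [h [Sh rm hU]] := witt isoU; rewrite rkU in rm hU.
  split=> mr; exists h => // v; have rm' : r = m by apply/eqP; rewrite eqn_leq rm mr.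
  by rewrite hU rm' addnK Lspan_m.
have [h [Sh km hW]] := witt isoW.
have hU := perp_image Sh UW hW.
have rkUW := perp_rank UW; rewrite rkU in rkUW.
split=> hr; exists h => // v.
  by rewrite hU rkUW subKn // (leq_trans km (leq_addr m m)).
have kW : \rank W = m.
  by apply/eqP; rewrite eqn_leq km -(leq_add2r m) -leq_subLR -rkUW hr.
have rm : r = m by rewrite rkUW kW addnK.
by rewrite hU kW rm Lspan_m.
Qed.

Lemma actP_val (g : 'M['F_2]_(m + m)) (p : P m) : g \in unitmx -> val (actP g p) = val p *m g.
Proof.
move=> ug; rewrite /actP insubdK //; apply: contraNneq (valP p) => pg0.
by rewrite -(mulmxK ug (val p)) pg0 mul0mx.
Qed.

Lemma C_ext (U : 'M['F_2]_(m + m)) (f g : P m -> 'F_2) :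
  C U f -> (forall p, f p = g p) -> C U g.
Proof. by move=> Cf fg; rewrite -(functional_extensionality _ _ fg). Qed.

Section Cosets.
Variables (Q : V -> bool) (a f : V).
Hypotheses (Qadd : forall x y, Q x -> Q y -> Q (x + y)) (Qf : Q f)
           (Qorth : forall v, Q v -> bform v f = 0) (af : bform a f = 1).

Local Notation ind b := (if b then 1 else 0 : 'F_2).

Lemma Q_shift (x : V) (c : 'F_2) : Q (x + c *: f) = Q x.
Proof.
case: (F2_cases c) => ->; first by rewrite scale0r addr0.
rewrite scale1r; apply/idP/idP => [xfQ | xQ]; last exact: Qadd xQ Qf.
by rewrite -[x]addr0 -(vadd2 f) addrA; apply: Qadd.
Qed.

Lemma coset_indicatorE (v : V) :
  ind (Q (v *m tv (a + f))) + ind (Q (v *m tv a)) = ind (Q (v + a)).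
Proof.
have vQ : Q v -> bform v f = 0 := Qorth (v := v).
have vaQ : Q (v + a) -> bform v f = 1.
  by move/Qorth; rewrite bformDl af; case: (F2_cases (bform v f)) => ->.
rewrite !tvE bformDr scalerDr addrA Q_shift.
have [bf|bf] := F2_cases (bform v f); rewrite bf.
  have -> : Q (v + a) = false.
    by apply/negP => /vaQ; rewrite bf => /esym/eqP; rewrite oner_eq0.
  by rewrite addr0 F2_add2.
have nQv : Q v = false by apply/negP => /vQ; rewrite bf => /eqP; rewrite oner_eq0.
by case: (F2_cases (bform v a)) => ->;
  rewrite ?add0r ?F2_add2 ?scale1r ?scale0r ?addr0 nQv ?addr0 ?add0r.
Qed.

Lemma coset_in_C (U h : 'M['F_2]_(m + m)) : is_Sp h -> (forall v, (v *m h <= U)%MS = Q v) ->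
  C U (fun p => ind (Q (val p + a))).
Proof.
move=> Sh hU.
have CQ : C U (fun p => ind (Q (val p))).
  apply: (C_ext (gs_act Sh (gs_gen (charfun U)))) => p.
  by rewrite /charfun actP_val ?Sh.1 // hU.
have Ct (u : V) : C U (fun p => ind (Q (val p *m tv u))).
  by apply: (C_ext (gs_act (Sp_tv u) CQ)) => p; rewrite actP_val // (Sp_tv u).1.
by apply: (C_ext (gs_add (Ct (a + f)) (Ct a))) => p; apply: coset_indicatorE.
Qed.

End Cosets.

End ModuleElements.

Section ClassRepresentatives.
Variable m : nat.
Local Notation V := (V m).

Lemma card_lt (k : nat) : (k <= m)%N -> #|[set j : 'I_m | (j < k)%N]| = k.
Proof.
move=> km; have -> : [set j : 'I_m | (j < k)%N] = widen_ord km @: [set: 'I_k].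
  apply/setP => j; rewrite inE; apply/idP/imsetP => [jk | [i _ ->]] //=.
  by exists (Ordinal jk); [rewrite inE | apply: ord_inj].
rewrite card_imset ?cardsT ?card_ord // => i j /(congr1 val) ij.
exact: val_inj.
Qed.

Lemma card_ge (k : nat) : (k <= m)%N -> #|[set j : 'I_m | (k <= j)%N]| = (m - k)%N.
Proof.
move=> km; have -> : [set j : 'I_m | (k <= j)%N] = ~: [set j : 'I_m | (j < k)%N].
  by apply/setP => j; rewrite !inE -leqNgt.
by rewrite cardsCs setCK card_ord card_lt.
Qed.

Lemma phi_monE (S T : {set 'I_m}) (p : P m) :
  phi_mon S T (fun _ => true) p =
  if [forall i in S, (xc i (val p) == 1) && (yc i (val p) == 1)] &&
     [forall i in T, xc i (val p) == 1] then 1 else 0.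
Proof.
rewrite /phi_mon !F2_prod; under eq_forallb do rewrite F2_mul_eq1.
by case: [forall _ in _, _]; case: [forall _ in _, _]; rewrite ?mul1r ?mul0r.
Qed.

Lemma sum_delta (Pr : pred 'I_m) (i : 'I_m) :
  \sum_(j < m | Pr j) (1 : 'F_2) * (i == j)%:R = (Pr i)%:R.
Proof.
have [Pi|nPi] := boolP (Pr i).
  rewrite (bigD1 i) //= eqxx mul1r big1 ?addr0 // => j /andP [_ nj].
  by rewrite eq_sym (negbTE nj) mulr0.
by apply: big1 => j Pj; case: eqP => [e|_]; [rewrite e Pj in nPi | rewrite mulr0].
Qed.

(* If U is an Sp(V)-translate of L_k^perp (0 < k <= m), the coset of
   a = e_0 + ... + e_(k-1) gives x_0 ... x_(k-1), of class (0, 0, k, m - k). *)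
Lemma Lperp_class (k : nat) (U h : 'M['F_2]_(m + m)) : (0 < k)%N -> (k <= m)%N ->
  is_Sp h -> (forall v : V, (v *m h <= U)%MS = Lperp k v) -> contains_class U 0 k.
Proof.
move=> k0 km Sh hU.
pose f0 : V := fvec 0; pose i0 : 'I_m := Ordinal (leq_trans k0 km).
pose a : V := \sum_(j < m | (j < k)%N) 1 *: evec j.
have xa i : xc i a = (i < k)%:R.
  by rewrite xc_sum (eq_bigr _ (fun j _ => congr1 _ (xc_evec i j))) sum_delta.
have Qf : Lperp k f0 by apply/forallP => i; rewrite xc_fvec eqxx implybT.
have Qorth v : Lperp k v -> bform v f0 = 0.
  by move/forallP/(_ i0)/implyP/(_ k0)/eqP; rewrite (bform_fvec v i0).
have af : bform a f0 = 1 by rewrite (bform_fvec a i0) xa k0.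
exists set0, [set j : 'I_m | (j < k)%N], (fun _ => true).
split; first by rewrite disjoints_subset sub0set.
split; first by rewrite cards0.
split; first exact: card_lt.
apply: (C_ext (coset_in_C (@Lperp_add m k) Qf Qorth af Sh hU)) => p.
rewrite phi_monE; congr (if _ then _ else _).
apply/forallP/andP => [vaQ | [_ /forall_inP xv] i]; first split.
- by apply/forall_inP => i; rewrite in_set0.
- apply/forall_inP => i; rewrite inE => ik.
  by move/implyP: (vaQ i) => /(_ ik); rewrite xcD xa ik F2_add1_eq0.
- by apply/implyP => ik; rewrite xcD xa ik F2_add1_eq0 xv ?inE.
Qed.

(* If U is an Sp(V)-translate of L_r (0 < r <= m), the coset of
   a = e_0 + ... + e_(m-1) + f_r + ... + f_(m-1) gives
   prod_(i >= r) x_i y_i * prod_(i < r) x_i, of class (0, m - r, r, 0). *)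
Lemma Lspan_class (r : nat) (U h : 'M['F_2]_(m + m)) : (0 < r)%N -> (r <= m)%N ->
  is_Sp h -> (forall v : V, (v *m h <= U)%MS = Lspan r v) -> contains_class U (m - r) r.
Proof.
move=> r0 rm Sh hU.
pose f0 : V := fvec 0; pose i0 : 'I_m := Ordinal (leq_trans r0 rm).
pose a : V := \sum_(j < m) 1 *: evec j + \sum_(j < m | (r <= j)%N) 1 *: fvec j.
have xa i : xc i a = 1.
  rewrite xcD xc_sum (eq_bigr _ (fun j _ => congr1 _ (xc_evec i j))) sum_delta.
  by rewrite xc_sum big1 ?addr0 // => j _; rewrite xc_fvec mulr0.
have ya i : yc i a = (r <= i)%:R.
  rewrite ycD yc_sum big1 ?add0r => [|j _]; last by rewrite yc_evec mulr0.
  by rewrite yc_sum (eq_bigr (fun j => 1 * (i == j)%:R)) ?sum_delta // => j _; rewrite yc_fvec.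
have Qorth v : Lspan r v -> bform v f0 = 0.
  by case/andP => /forallP /(_ i0) /eqP; rewrite (bform_fvec v i0).
have af : bform a f0 = 1 by rewrite (bform_fvec a i0) xa.
exists [set j : 'I_m | (r <= j)%N], [set j : 'I_m | (j < r)%N], (fun _ => true).
split; first by rewrite disjoints_subset; apply/subsetP => j; rewrite !inE -leqNgt.
split; first exact: card_ge.
split; first exact: card_lt.
have Qf : Lspan r f0 := Lspan_fvec (i := i0) r0.
apply: (C_ext (coset_in_C (@Lspan_add m r) Qf Qorth af Sh hU)) => p.
rewrite phi_monE; congr (if _ then _ else _).
have xva i : (xc i (val p + a) == 0) = (xc i (val p) == 1) by rewrite xcD xa F2_add1_eq0.
have yva (i : 'I_m) : (r <= i)%N -> (yc i (val p + a) == 0) = (yc i (val p) == 1).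
  by move=> ri; rewrite ycD ya ri F2_add1_eq0.
apply/andP/andP => [[/forallP X /forallP Y] | [/forall_inP XY /forall_inP XT]]; split.
- by apply/forall_inP => i; rewrite inE => ri; rewrite -xva -yva // X (implyP (Y i) ri).
- by apply/forall_inP => i _; rewrite -xva.
- apply/forallP => i; rewrite xva; case: (ltnP i r) => ir; first by rewrite XT ?inE.
  by move: (XY i); rewrite inE => /(_ ir) /andP [].
- apply/forallP => i; apply/implyP => ri; rewrite yva //.
  by move: (XY i); rewrite inE => /(_ ri) /andP [].
Qed.

End ClassRepresentatives.

Unset Implicit Arguments.

Theorem lemma6p5 (m r : nat) (hm : (2 <= m)%N) (hr1 : (1 <= r)%N)
  (hr2 : (r <= 2 * m - 1)%N) (U : 'M_(m + m)) (hU : @in_I m r U) :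
  ((m <= r)%N -> contains_class U 0 (2 * m - r)) /\
  ((r <= m)%N -> contains_class U (m - r) r).
Proof.
have [toLperp toLspan] := standard_form hU.
split=> hr.
  have [h Sh hUh] := toLperp hr.
  have -> : (2 * m = m + m)%N by rewrite mul2n addnn.
  by apply: (Lperp_class _ _ Sh hUh); lia.
have [h Sh hUh] := toLspan hr.
exact: (Lspan_class hr1 hr Sh hUh).
Qed.
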